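(* Let $K$ be the field of fractions of a complete discrete valuation ring $\mathcal{O}$ with maximal ideal $\mathfrak{p}$ such that the residue field $\mathcal{O}/\mathfrak{p}$ is finite. In the coefficient-choosing game of degree $d = 3$ over $K$, whichever player makes the last move has a winning strategy.
   Context: The coefficient-choosing game of degree $d$ over $K$: Nora and Wanda alternately choose coefficients of $f(x) = a_d x^d + \cdots + a_0$; on each move the current player picks a not-yet-chosen coefficient and assigns it a value in $K$, subject to $a_d \neq 0$, $a_0 \neq 0$. After all $d+1$ coefficients are chosen, Wanda wins if $f$ has a root in $K$, and Nora wins otherwise. Who moves first is fixed in advance. *)

From HB Require Import structures.
From mathcomp Require Import all_boot all_order all_algebra.
Set Implicit Arguments. Unset Strict Implicit. Unset Printing Implicit Defensive.
Import Order.TTheory GRing.Theory Num.Theory.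
Local Open Scope ring_scope.

(* v is a normalized discrete valuation on K; v 0 is irrelevant.
   [vge v x n] means "v(x) >= n" with the convention v(0) = +oo. *)
Definition vge (K : fieldType) (v : K -> int) (x : K) (n : int) : Prop :=
  x = 0 \/ n <= v x.

(* K together with v is the fraction field of a complete DVR
   O = {x | v x >= 0} whose residue field O/p (p = {x | v x >= 1}) is finite. *)
Record complete_dvf_finite_residue (K : fieldType) (v : K -> int) : Prop := {
  val_mul : forall x y : K, x != 0 -> y != 0 -> v (x * y) = v x + v y;
  val_add : forall x y : K, x != 0 -> y != 0 -> x + y != 0 ->
              Order.min (v x) (v y) <= v (x + y);
  val_unif : exists pi : K, pi != 0 /\ v pi = 1;
  val_complete : forall u : nat -> K,
    (forall n : int, exists N : nat, forall m k : nat,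
        (N <= m)%N -> (N <= k)%N -> vge v (u m - u k) n) ->
    exists l : K, forall n : int, exists N : nat, forall m : nat,
        (N <= m)%N -> vge v (u m - l) n;
  residue_finite : exists s : seq K,
    (forall y, y \in s -> vge v y 0) /\
    forall x : K, vge v x 0 -> exists2 y, y \in s & vge v (x - y) 1
}.

(* A position: coefficient a_i is [Some c] if already chosen, [None] otherwise. *)
Definition position (K : fieldType) (d : nat) := {ffun 'I_d.+1 -> option K}.

Definition empty_position (K : fieldType) (d : nat) : position K d :=
  [ffun _ => None].

Definition set_coef (K : fieldType) (d : nat) (s : position K d) (i : 'I_d.+1)
  (c : K) : position K d :=
  [ffun j => if j == i then Some c else s j].

Definition legal (K : fieldType) (d : nat) (i : 'I_d.+1) (c : K) : Prop :=
  ((i : nat) = 0%N \/ (i : nat) = d) -> c != 0.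

Definition poly_of (K : fieldType) (d : nat) (s : position K d) : {poly K} :=
  \poly_(i < d.+1) odflt 0 (s (inord i)).

(* [wanda_wins d wmove n s]: from position s, with n moves remaining and
   [wmove] = "Wanda is to move", Wanda has a winning strategy. *)
Fixpoint wanda_wins (K : fieldType) (d : nat) (wmove : bool) (n : nat)
  (s : position K d) : Prop :=
  match n with
  | 0 => exists x : K, root (poly_of s) x
  | n'.+1 =>
    if wmove then
      exists (i : 'I_d.+1) (c : K),
        s i = None /\ legal i c /\ wanda_wins (~~ wmove) n' (set_coef s i c)
    else
      forall (i : 'I_d.+1) (c : K),
        s i = None -> legal i c -> wanda_wins (~~ wmove) n' (set_coef s i c)
  end.

Fixpoint nora_wins (K : fieldType) (d : nat) (wmove : bool) (n : nat)
  (s : position K d) : Prop :=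
  match n with
  | 0 => ~ (exists x : K, root (poly_of s) x)
  | n'.+1 =>
    if wmove then
      forall (i : 'I_d.+1) (c : K),
        s i = None -> legal i c -> nora_wins (~~ wmove) n' (set_coef s i c)
    else
      exists (i : 'I_d.+1) (c : K),
        s i = None /\ legal i c /\ nora_wins (~~ wmove) n' (set_coef s i c)
  end.

Definition wanda_has_winning_strategy (K : fieldType) (d : nat)
  (wanda_first : bool) : Prop :=
  wanda_wins wanda_first d.+1 (empty_position K d).

Definition nora_has_winning_strategy (K : fieldType) (d : nat)
  (wanda_first : bool) : Prop :=
  nora_wins wanda_first d.+1 (empty_position K d).

From HB Require Import structures.
From mathcomp Require Import all_boot all_order all_algebra.
From mathcomp Require Import zify ring.
Set Implicit Arguments. Unset Strict Implicit. Unset Printing Implicit Defensive.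
Import Order.TTheory GRing.Theory Num.Theory.
Local Open Scope ring_scope.

(* Wanda, moving last when Nora starts, mirrors Nora: she answers a move on a_i
   by a move on a_(d-i).  Her final move is then on a middle coefficient, which
   she sets so that 1 is a root, or on an end coefficient opposite a nonzero one;
   there she picks a point x at which the rest g of the polynomial (resp. x g) does
   not vanish, which exists because K is infinite, and solves for the coefficient.

   Nora, moving last when Wanda starts, answers Wanda's first move by setting a
   middle coefficient to 0.  If her last move is on an end coefficient, she gives
   it a valuation so extreme that for every x a single monomial has strictly
   smallest valuation.  Otherwise she completes a_0 + a_1 x + a_3 x^3 (or its
   reversal).  If 3 does not divide v(a_0) - v(a_3), a_1 = 0 works; otherwise,
   rescaling to w y^3 + u y + 1 with w a unit, she needs u whose residue avoids
   -(w y^2 + 1/y) for all y in the residue field k^*, which exists because k is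
   finite.  Then no unit y is a root, and other y are ruled out by valuations. *)

Lemma poly_has_nonroot (R : idomainType) (f : nat -> R) (p : {poly R}) :
  injective f -> p != 0 -> exists x, ~~ root p x.
Proof.
move=> f_inj p_neq0; set rs := map f (iota 0 (size p)).
have /allPn[x _ x_nonroot] : ~~ all (root p) rs.
  apply/negP => all_roots.
  have := max_poly_roots p_neq0 all_roots.
  by rewrite map_inj_uniq ?iota_uniq // size_map size_iota ltnn => /(_ isT).
by exists x.
Qed.

Section CoefficientGame.
Variables (K : fieldType) (d : nat) (f : nat -> K).
Hypothesis f_inj : injective f.
Implicit Types (s : position K d) (i j : 'I_d.+1) (c : K).

Lemma coef_poly_of s i : (poly_of s)`_i = odflt 0 (s i).
Proof. by rewrite coef_poly ltn_ord inord_val. Qed.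

Lemma poly_of_neq0 s i a : s i = Some a -> a != 0 -> poly_of s != 0.
Proof.
move=> si; apply: contraNneq => q0.
by rewrite -[a]/(odflt 0 (Some a)) -si -coef_poly_of q0 coef0.
Qed.

Lemma poly_of_set_coef s i c :
  s i = None -> poly_of (set_coef s i c) = poly_of s + c *: 'X^i.
Proof.
move=> si; apply/polyP => k; rewrite coefD coefZ coefXn !coef_poly ffunE.
case: ltnP => [k_lt | k_ge]; last first.
  by rewrite gtn_eqF ?mulr0 ?addr0 // (leq_trans (ltn_ord i)).
have [-> | ik] := eqVneq k i; first by rewrite inord_val eqxx si add0r mulr1.
rewrite mulr0 addr0 (_ : (inord k == i) = false) //.
by apply: contraNF ik => /eqP <-; rewrite inordK.
Qed.

Definition free_coefs s : {set 'I_d.+1} := [set i | s i == None].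

Lemma free_coefs_empty : free_coefs (empty_position K d) = setT.
Proof. by apply/setP => i; rewrite !inE ffunE. Qed.

Lemma card_free_coefs_set_coef s i c :
  s i = None -> #|free_coefs (set_coef s i c)| = #|free_coefs s|.-1.
Proof.
move=> s_i; rewrite (cardsD1 i (free_coefs s)) inE s_i eqxx add1n /=.
apply: eq_card => j; rewrite !inE ffunE.
by have [-> | j_neq_i] := eqVneq j i; rewrite ?eqxx // (negPf j_neq_i).
Qed.

Definition legal_position s := forall i c, s i = Some c -> legal i c.

Lemma legal_position_empty : legal_position (empty_position K d).
Proof. by move=> i c; rewrite ffunE. Qed.

Lemma legal_position_set_coef s i c :
  legal_position s -> legal i c -> legal_position (set_coef s i c).
Proof.
by move=> legal_s legal_c j c'; rewrite ffunE; case: eqP => [-> [<-] | _ /legal_s].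
Qed.

Lemma wanda_wins_last_middle s i : s i = None -> (0 < i < d)%N -> wanda_wins true 1 s.
Proof.
move=> si /andP[i_gt0 i_ltd]; exists i, (- (poly_of s).[1]); split=> //; split.
  by move=> i_end; exfalso; lia.
by exists 1; rewrite /root poly_of_set_coef // hornerD hornerZ hornerXn expr1n mulr1 subrr.
Qed.

Lemma wanda_wins_last_const s a :
  s ord0 = None -> s ord_max = Some a -> a != 0 -> wanda_wins true 1 s.
Proof.
move=> s0 sd a_neq0; have [x qx_neq0] := poly_has_nonroot f_inj (poly_of_neq0 sd a_neq0).
exists ord0, (- (poly_of s).[x]); split=> //; split=> [_|]; first by rewrite oppr_eq0.
by exists x; rewrite /root poly_of_set_coef // hornerD hornerZ hornerXn expr0 mulr1 subrr.
Qed.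

Lemma wanda_wins_last_lead s a :
  s ord_max = None -> s ord0 = Some a -> a != 0 -> wanda_wins true 1 s.
Proof.
move=> sd s0 a_neq0.
have Xq_neq0 : poly_of s * 'X != 0.
  by rewrite mulf_neq0 ?polyX_eq0 ?(poly_of_neq0 s0).
have [x] := poly_has_nonroot f_inj Xq_neq0.
rewrite rootE hornerMX mulf_eq0 negb_or => /andP[qx_neq0 x_neq0].
exists ord_max, (- (poly_of s).[x] / x ^+ d); split=> //; split=> [_|].
  by rewrite mulf_neq0 ?oppr_eq0 ?invr_eq0 ?expf_neq0.
exists x; rewrite /root poly_of_set_coef // hornerD hornerZ hornerXn.
by rewrite divfK ?expf_neq0 // subrr.
Qed.

Definition mirror_closed s := forall i, s (rev_ord i) = None -> s i = None.

Hypothesis d_odd : odd d.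

Lemma rev_ord_neq i : rev_ord i != i.
Proof.
apply/eqP => /(congr1 val) /= rev_i; have d_double : d = (val i).*2 by rewrite -addnn; lia.
by move: d_odd; rewrite d_double odd_double.
Qed.

Lemma mirror_closed_set_coef2 s i c c' :
  mirror_closed s -> mirror_closed (set_coef (set_coef s i c) (rev_ord i) c').
Proof.
move=> s_closed j; rewrite !ffunE.
have [-> | j_neq_i] := eqVneq j i; first by rewrite eqxx.
rewrite (inj_eq rev_ord_inj) (negPf j_neq_i).
have [-> | j_neq_ri] := eqVneq j (rev_ord i); first by rewrite rev_ordK eqxx.
rewrite -[in rev_ord j == i](rev_ordK i) (inj_eq rev_ord_inj) (negPf j_neq_ri).
exact: s_closed.
Qed.

Lemma set_coef_rev_free s i c :
  s (rev_ord i) = None -> set_coef s i c (rev_ord i) = None.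
Proof. by rewrite ffunE (negPf (rev_ord_neq i)). Qed.

Lemma wanda_wins_mirror_last s i c :
  s (rev_ord i) = None -> legal i c -> wanda_wins true 1 (set_coef s i c).
Proof.
move=> s_rev legal_c; set s' := set_coef s i c.
have s'_rev : s' (rev_ord i) = None by rewrite set_coef_rev_free.
have s'_i : s' i = Some c by rewrite ffunE eqxx.
have [i_end | i_mid] := boolP ((val i == 0)%N || (val i == d)); last first.
  apply: (wanda_wins_last_middle s'_rev); move: i_mid (ltn_ord i) => /=; lia.
have c_neq0 : c != 0 by apply: legal_c; case/orP: i_end => /eqP; [left | right].
clearbody s'; case/orP: i_end => /eqP i_end.
  have i0 : i = ord0 by apply: val_inj.
  have rev0 : rev_ord i = ord_max by apply: val_inj; rewrite /= i_end subn1.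
  by apply: (wanda_wins_last_lead _ _ c_neq0); rewrite -?rev0 -?i0.
have id : i = ord_max by apply: val_inj.
have revd : rev_ord i = ord0 by apply: val_inj; rewrite /= i_end subnn.
by apply: (wanda_wins_last_const _ _ c_neq0); rewrite -?revd -?id.
Qed.

Lemma wanda_wins_mirror k s : mirror_closed s -> wanda_wins false k.*2.+2 s.
Proof.
elim: k s => [|k IH] s s_closed i c s_i legal_c.
all: have s_rev : s (rev_ord i) = None by apply: s_closed; rewrite rev_ordK.
  exact: wanda_wins_mirror_last.
exists (rev_ord i), 1; split; first exact: set_coef_rev_free.
split=> [_ | ]; first exact: oner_neq0.
exact/IH/mirror_closed_set_coef2.
Qed.

Lemma wanda_wins_odd_degree : wanda_has_winning_strategy K d false.
Proof.
have empty_closed : mirror_closed (empty_position K d) by move=> i; rewrite !ffunE.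
have moves : (d./2).*2.+2 = d.+1 by rewrite -[in RHS](odd_double_half d) d_odd add1n.
by have := wanda_wins_mirror d./2 empty_closed; rewrite moves.
Qed.

End CoefficientGame.

Section ClassPigeonhole.
Variables (T : eqType) (e : rel T) (s : seq T) (P : pred T) (f : T -> T).
Hypotheses (e_refl : reflexive e) (e_sym : symmetric e) (e_trans : transitive e).
Hypothesis P_cover : forall x, P x -> has (e x) s.
Hypothesis f_cover : forall x, P x -> has (e (f x)) s.
Hypothesis P_stable : forall x y, e x y -> P x -> P y.
Hypothesis f_stable : forall x y, P x -> e x y -> e (f x) (f y).
Hypothesis s_notP : has (predC P) s.

Let canon x := nth x s (find (e x) s).

Let has_mem x : x \in s -> has (e x) s.
Proof. by move=> xs; apply/hasP; exists x. Qed.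

Let canon_mem x : has (e x) s -> canon x \in s.
Proof. by move=> hx; rewrite mem_nth // -has_find. Qed.

Let canon_rel x : has (e x) s -> e x (canon x).
Proof. exact: nth_find. Qed.

Let canon_eq x y : has (e x) s -> e x y -> canon x = canon y.
Proof.
move=> hx exy; have e_xy := sym_left_transitive e_sym e_trans exy.
by rewrite /canon -(eq_find e_xy); apply: set_nth_default; rewrite -has_find.
Qed.

Lemma exists_class_missed : exists2 u, u \in s & forall x, P x -> ~~ e u (f x).
Proof.
set C := undup [seq x <- s | canon x == x].
have memC x : (x \in C) = (x \in s) && (canon x == x).
  by rewrite mem_undup mem_filter andbC.
have canon_memC x : has (e x) s -> canon x \in C.
  by move=> hx; rewrite memC canon_mem //; apply/eqP/esym/canon_eq/canon_rel.
set hit := [seq canon (f x) | x <- C & P x].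
have [u uC u_missed] : exists2 u, u \in C & u \notin hit.
  apply/allPn/negP => /allP C_hit.
  have := uniq_leq_size (undup_uniq _) C_hit; rewrite size_map size_filter.
  have [z zs notPz] := hasP s_notP.
  have notPz' : ~~ P (canon z).
    by apply: contra notPz; apply: P_stable; rewrite e_sym canon_rel ?has_mem.
  rewrite -(count_predC P C) -{2}[count P C]addn0 leq_add2l leqn0; apply/negP.
  by rewrite -lt0n -has_count; apply/hasP; exists (canon z); rewrite ?canon_memC ?has_mem.
move: uC; rewrite memC => /andP[us /eqP canon_u]; exists u => // x Px.
apply: contra u_missed => e_u_fx; apply/mapP; exists (canon x).
  rewrite mem_filter canon_memC ?P_cover // andbT.
  exact: P_stable (canon_rel (P_cover Px)) Px.
rewrite -canon_u (canon_eq (has_mem us) e_u_fx).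
by apply: canon_eq (f_cover Px) (f_stable Px (canon_rel (P_cover Px))).
Qed.

End ClassPigeonhole.

Definition cubic (R : nzRingType) (a0 a1 a2 a3 x : R) :=
  a0 + a1 * x + a2 * x ^+ 2 + a3 * x ^+ 3.

Lemma cubic_rev (F : fieldType) (a0 a1 a2 a3 x : F) :
  x != 0 -> cubic a0 a1 a2 a3 x = x ^+ 3 * cubic a3 a2 a1 a0 x^-1.
Proof. by move=> x_neq0; rewrite /cubic; field. Qed.

Lemma cubic_rev_neq0 (F : fieldType) (a0 a1 a2 a3 : F) :
  a0 != 0 -> (forall y, cubic a3 a2 a1 a0 y != 0) -> forall x, cubic a0 a1 a2 a3 x != 0.
Proof.
move=> a0_neq0 rev_neq0 x; have [-> | x_neq0] := eqVneq x 0.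
  by rewrite /cubic !expr0n !mulr0 !addr0.
by rewrite cubic_rev // mulf_neq0 ?expf_neq0.
Qed.

Section ValuedField.
Variables (K : fieldType) (v : K -> int).
Hypothesis Hv : complete_dvf_finite_residue v.
Implicit Types (x y : K) (m n : int).

Local Notation vM := (val_mul Hv).

Lemma v1 : v 1 = 0.
Proof.
have : v (1 * 1) = v 1 + v 1 := vM (oner_neq0 K) (oner_neq0 K).
by rewrite mulr1; lia.
Qed.

Lemma vN x : x != 0 -> v (- x) = v x.
Proof.
have m1_neq0 : (-1 : K) != 0 by rewrite oppr_eq0 oner_neq0.
have : v (-1 * -1) = v (-1) + v (-1) := vM m1_neq0 m1_neq0.
rewrite mulrNN mulr1 v1 => vm1 x_neq0.
by rewrite -mulN1r vM //; lia.
Qed.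

Lemma vV x : x != 0 -> v x^-1 = - v x.
Proof.
move=> x_neq0; have := vM x_neq0 (invr_neq0 x_neq0).
by rewrite mulfV // v1; lia.
Qed.

Lemma vX x k : x != 0 -> v (x ^+ k) = v x * k%:Z.
Proof.
move=> x_neq0; elim: k => [|k IH]; first by rewrite expr0 v1; lia.
by rewrite exprS vM ?expf_neq0 // IH; lia.
Qed.

Lemma exists_val n : exists2 e : K, e != 0 & v e = n.
Proof.
have [pi [pi_neq0 v_pi]] := val_unif Hv.
case: n => k; first by exists (pi ^+ k); rewrite ?expf_neq0 ?vX // v_pi; lia.
exists (pi ^+ k.+1)^-1; first by rewrite invr_eq0 expf_neq0.
by rewrite vV ?expf_neq0 // vX // v_pi; lia.
Qed.

Lemma valued_field_infinite : exists f : nat -> K, injective f.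
Proof.
have [pi pi_neq0 v_pi] := exists_val 1; exists (fun k => pi ^+ k) => k l e.
by have := congr1 v e; rewrite !vX // v_pi; lia.
Qed.

Lemma vge_val x : vge v x (v x).
Proof. by right. Qed.

Lemma vgeW x n m : vge v x n -> m <= n -> vge v x m.
Proof. by case=> [-> | le_nv] le_mn; [left | right; apply: le_trans le_nv]. Qed.

Lemma vge_abs x : vge v x (- `|v x|).
Proof. by right; lia. Qed.

Lemma vgeN x n : vge v x n -> vge v (- x) n.
Proof.
case=> [-> | le_nv]; first by left; rewrite oppr0.
by have [-> | x_neq0] := eqVneq x 0; [left; rewrite oppr0 | right; rewrite vN].
Qed.

Lemma vgeD x y n : vge v x n -> vge v y n -> vge v (x + y) n.
Proof.
case=> [-> | le_nx]; first by rewrite add0r.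
case=> [-> | le_ny]; first by rewrite addr0; right.
have [-> | x_neq0] := eqVneq x 0; first by rewrite add0r; right.
have [-> | y_neq0] := eqVneq y 0; first by rewrite addr0; right.
have [-> | xy_neq0] := eqVneq (x + y) 0; first by left.
by right; apply: le_trans (val_add Hv x_neq0 y_neq0 xy_neq0); rewrite le_min le_nx le_ny.
Qed.

Lemma vgeB x y n : vge v x n -> vge v y n -> vge v (x - y) n.
Proof. by move=> vx vy; apply/vgeD/vgeN. Qed.

Lemma vgeM x y n m : vge v x n -> vge v y m -> vge v (x * y) (n + m).
Proof.
case=> [-> | le_nx]; first by left; rewrite mul0r.
case=> [-> | le_my]; first by left; rewrite mulr0.
have [-> | x_neq0] := eqVneq x 0; first by left; rewrite mul0r.
have [-> | y_neq0] := eqVneq y 0; first by left; rewrite mulr0.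
by right; rewrite vM // lerD.
Qed.

Lemma addr_dominant_neq0 x y : x != 0 -> vge v y (v x + 1) -> x + y != 0.
Proof.
move=> x_neq0 vy; apply/eqP => /(canRL (addKr x)); rewrite addr0 => y_eq.
move: vy; rewrite y_eq => -[/eqP | ]; rewrite ?oppr_eq0 ?vN //.
  by rewrite (negPf x_neq0).
by lia.
Qed.

Lemma val_addr_dominant x y : x != 0 -> vge v y (v x + 1) -> v (x + y) = v x.
Proof.
move=> x_neq0 vy; have xy_neq0 := addr_dominant_neq0 x_neq0 vy.
have [| v_xy] : vge v (x + y) (v x).
  by apply: vgeD; [right | apply: (vgeW vy); lia].
  by move/eqP; rewrite (negPf xy_neq0).
suff : ~ v x < v (x + y) by lia.
move=> lt_x_xy; have : vge v ((x + y) - y) (v x + 1) by apply: vgeB => //; right; lia.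
by rewrite addrK => -[/eqP | ]; [rewrite (negPf x_neq0) | lia].
Qed.

Lemma addr_val_neq_neq0 x y : x != 0 -> y != 0 -> v x != v y -> x + y != 0.
Proof.
move=> x_neq0 y_neq0; rewrite neq_lt => /orP[lt_xy | lt_yx].
  by apply: addr_dominant_neq0 => //; right; lia.
by rewrite addrC; apply: addr_dominant_neq0 => //; right; lia.
Qed.

Lemma rootless_cubic_const a1 a2 a3 :
  a3 != 0 -> exists2 a0, a0 != 0 & forall x, cubic a0 a1 a2 a3 x != 0.
Proof.
move=> a3_neq0; have [m m_large] : exists m, `|v a1| + `|v a2| + `|v a3| < m.
  by exists (`|v a1| + `|v a2| + `|v a3| + 1); lia.
have [a0 a0_neq0 v_a0] := exists_val (v a3 + 1 - 3 * m).
exists a0 => // x; rewrite /cubic.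
have [-> | x_neq0] := eqVneq x 0; first by rewrite !expr0n !mulr0 !addr0.
(* The leading term dominates when v x <= - m, the constant term otherwise. *)
have v_a3x : v (a3 * x ^+ 3) = v a3 + v x * 3 by rewrite vM ?expf_neq0 ?vX.
have v_a1x : vge v (a1 * x) (- `|v a1| + v x) by apply: vgeM (vge_abs _) _; right.
have v_a2x : vge v (a2 * x ^+ 2) (- `|v a2| + v x * 2).
  by apply: vgeM (vge_abs _) _; right; rewrite vX.
have [le_xm | gt_xm] := leP (v x) (- m).
  rewrite addrC; apply: addr_dominant_neq0; first by rewrite mulf_neq0 ?expf_neq0.
  rewrite v_a3x; apply: vgeD; first apply: vgeD.
  - by right; lia.
  - by apply: (vgeW v_a1x); lia.
  - by apply: (vgeW v_a2x); lia.
rewrite -!addrA; apply: (addr_dominant_neq0 a0_neq0); rewrite v_a0.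
apply: vgeD; last apply: vgeD.
- by apply: (vgeW v_a1x); lia.
- by apply: (vgeW v_a2x); lia.
- by right; rewrite v_a3x; lia.
Qed.

Lemma rootless_cubic_lead a0 a1 a2 :
  a0 != 0 -> exists2 a3, a3 != 0 & forall x, cubic a0 a1 a2 a3 x != 0.
Proof.
move=> a0_neq0; have [a3 a3_neq0 rev_neq0] := rootless_cubic_const a2 a1 a0_neq0.
by exists a3 => //; apply: cubic_rev_neq0.
Qed.

Definition same_residue x y : bool := (x - y == 0) || (1 <= v (x - y)).

Lemma same_residueP x y : reflect (vge v (x - y) 1) (same_residue x y).
Proof. by apply: (iffP orP) => -[/eqP | ]; [left | right | left | right]. Qed.

Lemma same_residue_refl : reflexive same_residue.
Proof. by move=> x; rewrite /same_residue subrr eqxx. Qed.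

Lemma same_residue_sym : symmetric same_residue.
Proof.
by move=> x y; apply/idP/idP => /same_residueP/vgeN; rewrite opprB => /same_residueP.
Qed.

Lemma same_residue_trans : transitive same_residue.
Proof.
move=> y x z /same_residueP xy /same_residueP yz; apply/same_residueP.
by rewrite -(subrKA y); apply: vgeD.
Qed.

Definition vunit x : bool := (x != 0) && (v x == 0).

Lemma vunit_same_residue x y : same_residue x y -> vunit x -> vunit y.
Proof.
rewrite same_residue_sym => /same_residueP yx /andP[x_neq0 /eqP v_x].
have dom : vge v (y - x) (v x + 1) by rewrite v_x.
rewrite /vunit -(subrK x y) addrC addr_dominant_neq0 //=.
by rewrite val_addr_dominant // v_x.
Qed.

Lemma residue_avoiding_cubic w :
  w != 0 -> v w = 0 ->
  exists2 u, vge v u 0 & forall y, vunit y -> ~ vge v (cubic 1 u 0 w y) 1.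
Proof.
move=> w_neq0 v_w; have [R [R_int R_cover]] := residue_finite Hv.
have has_rep x : vge v x 0 -> has (same_residue x) R.
  by case/R_cover => r rR xr; apply/hasP; exists r => //; apply/same_residueP.
have vunit_int y : vunit y -> vge v y 0 /\ vge v y^-1 0.
  by case/andP => y_neq0 /eqP v_y; split; right; rewrite ?vV // v_y.
pose g y := - (w * y ^+ 2 + y^-1).
have g_int y : vunit y -> vge v (g y) 0.
  case/vunit_int => y_int yV_int; apply/vgeN/vgeD => //.
  by apply: (vgeW (vgeM (vge_val w) (vgeM y_int y_int))); rewrite v_w.
have g_stable y y' : vunit y -> same_residue y y' -> same_residue (g y) (g y').
  move=> y_unit yy'; have y'_unit := vunit_same_residue yy' y_unit.
  have [[y_int yV_int] [y'_int y'V_int]] := (vunit_int y y_unit, vunit_int y' y'_unit).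
  move: yy'; rewrite same_residue_sym => /same_residueP y'y; apply/same_residueP.
  have -> : g y - g y' = w * (y' - y) * (y' + y) + (y' - y) * - (y^-1 * y'^-1).
    move: y_unit y'_unit => /andP[y_neq0 _] /andP[y'_neq0 _].
    by rewrite /g; field; rewrite y_neq0 y'_neq0.
  apply: vgeD.
    by apply: (vgeW (vgeM (vgeM (vge_val w) y'y) (vgeD y'_int y_int))); rewrite v_w.
  by apply: (vgeW (vgeM y'y (vgeN (vgeM yV_int y'V_int)))).
have R_nonunit : has (predC vunit) R.
  have [r rR /same_residueP] := hasP (has_rep 0 (or_introl erefl)).
  rewrite sub0r => /vgeN; rewrite opprK => r_res; apply/hasP; exists r => //=.
  apply/negP => /andP[r_neq0 /eqP v_r].
  by case: r_res => [/eqP | ]; [rewrite (negPf r_neq0) | rewrite v_r].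
have [u uR u_missed] := exists_class_missed same_residue_refl same_residue_sym
  same_residue_trans (fun y yu => has_rep y (proj1 (vunit_int y yu)))
  (fun y yu => has_rep _ (g_int y yu)) vunit_same_residue g_stable R_nonunit.
exists u => [|y y_unit]; first exact: R_int.
have [y_neq0 _] := andP y_unit; have [_ yV_int] := vunit_int y y_unit.
have -> : cubic 1 u 0 w y = y * (u - g y) by rewrite /cubic /g; field.
move=> /(vgeM yV_int); rewrite mulKf // add0r => /same_residueP u_gy.
by move: (u_missed y y_unit); rewrite u_gy.
Qed.

Lemma rootless_unit_cubic w u :
  w != 0 -> v w = 0 -> vge v u 0 ->
  (forall y, vunit y -> ~ vge v (cubic 1 u 0 w y) 1) -> forall y, cubic 1 u 0 w y != 0.
Proof.
move=> w_neq0 v_w v_u avoid y; have [-> | y_neq0] := eqVneq y 0.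
  by rewrite /cubic !expr0n !mulr0 !addr0 oner_neq0.
have v_wy : v (w * y ^+ 3) = v y * 3 by rewrite vM ?expf_neq0 // vX // v_w add0r.
have v_uy : vge v (u * y) (v y) by apply: (vgeW (vgeM v_u (vge_val y))); lia.
case: (ltgtP (v y) 0) => [lt_y0 | gt_y0 | eq_y0].
- rewrite /cubic mul0r addr0 addrC; apply: addr_dominant_neq0.
    by rewrite mulf_neq0 ?expf_neq0.
  rewrite v_wy; apply: vgeD; first by right; rewrite v1; lia.
  by apply: (vgeW v_uy); lia.
- rewrite /cubic mul0r addr0 -addrA; apply: addr_dominant_neq0; first exact: oner_neq0.
  rewrite v1; apply: vgeD; first by apply: (vgeW v_uy); lia.
  by right; rewrite v_wy; lia.
- apply/eqP => root_y; apply: (avoid y); first by rewrite /vunit y_neq0 eq_y0 eqxx.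
  by rewrite root_y; left.
Qed.

Lemma rootless_cubic_linear a0 a3 :
  a0 != 0 -> a3 != 0 -> exists a1, forall x, cubic a0 a1 0 a3 x != 0.
Proof.
move=> a0_neq0 a3_neq0; have [div3 | ndiv3] := boolP (3 %| v a0 - v a3)%Z; last first.
  exists 0 => x; have [-> | x_neq0] := eqVneq x 0.
    by rewrite /cubic !expr0n !mulr0 !addr0.
  rewrite /cubic !mul0r !addr0; apply: addr_val_neq_neq0 => //.
    by rewrite mulf_neq0 ?expf_neq0.
  by rewrite vM ?expf_neq0 // vX //; apply: contra ndiv3 => /eqP ->; lia.
have [e e_neq0 v_e] := exists_val ((v a0 - v a3) %/ 3)%Z.
have e3 : v e * 3 = v a0 - v a3 by rewrite v_e divzK.
set w := a3 * e ^+ 3 / a0.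
have w_neq0 : w != 0 by rewrite /w !mulf_neq0 ?invr_eq0 ?expf_neq0.
have v_w : v w = 0.
  rewrite /w vM ?mulf_neq0 ?invr_eq0 ?expf_neq0 // vM ?expf_neq0 // vV // vX //.
  lia.
have [u v_u avoid] := residue_avoiding_cubic w_neq0 v_w.
exists (u * a0 / e) => x.
have -> : cubic a0 (u * a0 / e) 0 a3 x = a0 * cubic 1 u 0 w (x / e).
  by rewrite /cubic /w; field; rewrite e_neq0 a0_neq0.
by rewrite mulf_neq0 ?rootless_unit_cubic.
Qed.

Lemma rootless_cubic_quadratic a0 a3 :
  a0 != 0 -> a3 != 0 -> exists a2, forall x, cubic a0 0 a2 a3 x != 0.
Proof.
move=> a0_neq0 a3_neq0; have [a2 rev_neq0] := rootless_cubic_linear a3_neq0 a0_neq0.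
by exists a2; apply: cubic_rev_neq0.
Qed.

End ValuedField.

Definition o0 : 'I_4 := @Ordinal 4 0 isT.
Definition o1 : 'I_4 := @Ordinal 4 1 isT.
Definition o2 : 'I_4 := @Ordinal 4 2 isT.
Definition o3 : 'I_4 := @Ordinal 4 3 isT.

Lemma ord4P (i : 'I_4) : [\/ i = o0, i = o1, i = o2 | i = o3].
Proof.
case: i => [[|[|[|[|//]]]] lt_i4].
- by apply: Or41; apply: val_inj.
- by apply: Or42; apply: val_inj.
- by apply: Or43; apply: val_inj.
- by apply: Or44; apply: val_inj.
Qed.

Lemma root_poly_of3 (K : fieldType) (s : position K 3) x :
  root (poly_of s) x =
  (cubic (odflt 0 (s o0)) (odflt 0 (s o1)) (odflt 0 (s o2)) (odflt 0 (s o3)) x == 0).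
Proof.
rewrite rootE horner_poly; under eq_bigr do rewrite inord_val.
rewrite !big_ord_recl big_ord0 addr0 /cubic expr0 mulr1 expr1 !addrA.
have [e0 e1 e2 e3] : [/\ ord0 = o0, lift ord0 ord0 = o1, lift ord0 (lift ord0 ord0) = o2
    & lift ord0 (lift ord0 (lift ord0 ord0)) = o3 :> 'I_4] by split; apply: val_inj.
by rewrite e3 e2 e1 e0.
Qed.

Section DegreeThree.
Variables (K : fieldType) (v : K -> int).
Hypothesis Hv : complete_dvf_finite_residue v.
Implicit Types s : position K 3.

Lemma nora_wins_last s j :
  free_coefs s = [set j] -> legal_position s -> s o1 = Some 0 \/ s o2 = Some 0 ->
  nora_wins false 1 s.
Proof.
move=> free_j legal_s mid0.
have free_iff i : (s i == None) = (i == j) by rewrite -in_set1 -free_j inE.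
have s_j : s j = None by apply/eqP; rewrite free_iff.
have set_end i : i != j -> (val i = 0 \/ val i = 3)%N -> odflt 0 (s i) != 0.
  by rewrite -free_iff => /negPf; case s_i: (s i) => [c|] // _ /(legal_s i c s_i).
suff [c legal_c rootless] :
    exists2 c, legal j c & forall x, ~~ root (poly_of (set_coef s j c)) x.
  by exists j, c; split=> //; split=> // -[x]; apply/negP.
case: (ord4P j) => j_eq; rewrite {}j_eq in s_j set_end *.
- have [a0 a0_neq0 rootless] := rootless_cubic_const Hv (odflt 0 (s o1)) (odflt 0 (s o2))
    (set_end o3 isT (or_intror erefl)).
  by exists a0 => // x; rewrite root_poly_of3 !ffunE /=.
- have [| s2] := mid0; first by rewrite s_j.
  have [a1 rootless] := rootless_cubic_linear Hv (set_end o0 isT (or_introl erefl))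
    (set_end o3 isT (or_intror erefl)).
  by exists a1 => [[] | x] //; rewrite root_poly_of3 !ffunE /= s2.
- have [s1 | ] := mid0; last by rewrite s_j.
  have [a2 rootless] := rootless_cubic_quadratic Hv (set_end o0 isT (or_introl erefl))
    (set_end o3 isT (or_intror erefl)).
  by exists a2 => [[] | x] //; rewrite root_poly_of3 !ffunE /= s1.
- have [a3 a3_neq0 rootless] := rootless_cubic_lead Hv (odflt 0 (s o1)) (odflt 0 (s o2))
    (set_end o0 isT (or_introl erefl)).
  by exists a3 => // x; rewrite root_poly_of3 !ffunE /=.
Qed.

Lemma nora_wins_zero_middle : nora_has_winning_strategy K 3 true.
Proof.
move=> i1 c1 _ legal_c1; set s1 := set_coef _ i1 c1.
pose m := if (i1 < 2)%N then o2 else o1.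
have m_neq_i1 : m != i1 by rewrite /m; case: (ord4P i1) => ->.
have s1_m : s1 m = None by rewrite ffunE (negPf m_neq_i1) ffunE.
have legal_m : legal m (0 : K) by rewrite /m; case: ifP => _ [].
exists m, 0; split=> //; split=> // i3 c3 s2_i3 legal_c3.
set s2 := set_coef s1 m 0; set s3 := set_coef s2 i3 c3.
have [j free_j] : exists j, free_coefs s3 = [set j].
  apply/cards1P; rewrite (card_free_coefs_set_coef _ s2_i3) card_free_coefs_set_coef //.
  by rewrite card_free_coefs_set_coef ?ffunE // free_coefs_empty cardsT card_ord.
apply: (nora_wins_last free_j).
  by do 3!apply: legal_position_set_coef => //; exact: legal_position_empty.
have s3_m : s3 m = Some 0.
  rewrite ffunE; case: eqP => [m_eq | _]; last by rewrite ffunE eqxx.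
  by move: s2_i3; rewrite -m_eq ffunE eqxx.
by move: s3_m; rewrite /m; case: ifP; [right | left].
Qed.

End DegreeThree.

Theorem proposition2 (K : fieldType) (v : K -> int) :
  complete_dvf_finite_residue v ->
  wanda_has_winning_strategy K 3 false /\ nora_has_winning_strategy K 3 true.
Proof.
move=> Hv; have [f f_inj] := valued_field_infinite Hv.
by split; [apply: (wanda_wins_odd_degree f_inj) | apply: nora_wins_zero_middle Hv].
Qed.
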